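(* Let $n\ge 2$ be an integer and $0\le n_1\le n$. For $p\in(0.5,1]$, $q=1-p$ and $\rho\in[-1,1]$ define $$h(p,\rho)=\frac{pq}{(p-q)^2}\left(n+\frac{\rho\left((2n_1-n)^2-n\right)}{n-1}\right).$$ Then (i) $h(p,\rho)$ is monotonically increasing with respect to $\rho$ if $n_1/n\le \frac12-\frac{1}{2\sqrt n}$ or $n_1/n\ge \frac12+\frac{1}{2\sqrt n}$, and monotonically decreasing with respect to $\rho$ if $\frac12-\frac{1}{2\sqrt n}<n_1/n<\frac12+\frac{1}{2\sqrt n}$; (ii) $h(p,\rho)$ is monotonically decreasing with respect to $p\in(0.5,1]$.
   Context: $h(p,\rho)$ is the variance of the JRR frequency estimator; monotonicity in $\rho$ is for fixed $p$ and in $p$ for fixed $\rho$ (monotone in the non-strict sense where the coefficient of $\rho$ vanishes). *)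

From mathcomp Require Import all_boot all_order all_algebra.
Set Implicit Arguments. Unset Strict Implicit. Unset Printing Implicit Defensive.
Import Order.TTheory GRing.Theory Num.Theory.
Local Open Scope ring_scope.

Definition h (R : fieldType) (n n1 : nat) (p rho : R) : R :=
  let q := 1 - p in
  p * q / (p - q) ^+ 2 *
  (n%:R + rho * ((2 * n1%:R - n%:R) ^+ 2 - n%:R) / (n%:R - 1)).

From mathcomp Require Import all_boot all_order all_algebra.
From mathcomp Require Import ring lra.
Import Order.TTheory GRing.Theory Num.Theory.
Local Open Scope ring_scope.

(* Write h(p, rho) = A(p) * (n + rho C / (n - 1)) with A(p) = pq / (p - q)^2 and
   C = (2 n1 - n)^2 - n.  As A >= 0, the sign of C decides the monotonicity in rho,
   and C >= 0 exactly when |n1/n - 1/2| >= 1/(2 sqrt n).  With x = p - q = 2p - 1 one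
   has pq = (1 - x^2)/4, so A(p) = (x^-2 - 1)/4 decreases for p > 1/2; since
   |C| <= n(n - 1), the second factor is nonnegative for |rho| <= 1, so h decreases
   in p. *)

Definition variance_scale {R : fieldType} (p : R) : R :=
  p * (1 - p) / (p - (1 - p)) ^+ 2.

Definition centred_excess (R : fieldType) (n n1 : nat) : R :=
  (2 * n1%:R - n%:R) ^+ 2 - n%:R.

Lemma hE (R : fieldType) (n n1 : nat) (p rho : R) :
  h n n1 p rho =
  variance_scale p * (n%:R + rho * centred_excess R n n1 / (n%:R - 1)).
Proof. by []. Qed.

Lemma h_rho_increment (R : fieldType) (n n1 : nat) (p r1 r2 : R) :
  h n n1 p r2 - h n n1 p r1 =
  (r2 - r1) * (variance_scale p * centred_excess R n n1 / (n%:R - 1)).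
Proof. rewrite !hE; ring. Qed.

Section VarianceScale.
Variable R : realFieldType.

Lemma variance_scale_ge0 (p : R) : 0 <= p <= 1 -> 0 <= variance_scale p.
Proof.
case/andP=> p_ge0 p_le1.
by rewrite divr_ge0 ?sqr_ge0 // mulr_ge0 // subr_ge0.
Qed.

Lemma variance_scaleE (p : R) : p != 2^-1 ->
  variance_scale p = ((p - (1 - p)) ^- 2 - 1) / 4.
Proof.
move=> p_neq_half; have x_neq0 : p - (1 - p) != 0.
  by apply: contra p_neq_half => /eqP x0; apply/eqP; lra.
by rewrite /variance_scale; field.
Qed.

Lemma variance_scale_nonincreasing (p1 p2 : R) : 2^-1 < p1 -> p1 <= p2 ->
  variance_scale p2 <= variance_scale p1.
Proof.
move=> p1_gt_half p12.
have x1_gt0 : 0 < p1 - (1 - p1) by lra.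
have x2_gt0 : 0 < p2 - (1 - p2) by lra.
have p2_gt_half := lt_le_trans p1_gt_half p12.
rewrite !variance_scaleE ?gt_eqF //.
rewrite ler_pM2r ?invr_gt0 // lerD2r lef_pV2 ?posrE ?exprn_gt0 //.
by rewrite ler_sqr ?nnegrE; lra.
Qed.

End VarianceScale.

Lemma centre_window_iff {R : rcfType} (N M : R) : 0 < N ->
  (2^-1 - (2 * Num.sqrt N)^-1 < M / N < 2^-1 + (2 * Num.sqrt N)^-1)
  = ((2 * M - N) ^+ 2 < N).
Proof.
move=> N_gt0; have s_gt0 : 0 < Num.sqrt N by rewrite sqrtr_gt0.
have twoN_gt0 : 0 < 2 * N by rewrite mulr_gt0.
rewrite -ltr_distlC.
have -> : 2^-1 - M / N = - (2 * M - N) / (2 * N).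
  by field; rewrite gt_eqF.
have -> : (2 * Num.sqrt N)^-1 = Num.sqrt N / (2 * N).
  rewrite -[X in _ / (2 * X)](sqr_sqrtr (ltW N_gt0)).
  by field; rewrite gt_eqF.
rewrite normf_div normrN (gtr0_norm twoN_gt0) ltr_pM2r ?invr_gt0 //.
by rewrite -sqrtr_sqr ltr_sqrt.
Qed.

Section RhoCoefficient.
Variable R : realFieldType.

Lemma norm_centred_sq_sub_le (N M : R) : 2 <= N -> 0 <= M <= N ->
  `|(2 * M - N) ^+ 2 - N| <= N * (N - 1).
Proof.
move=> N_ge2 /andP[M_ge0 M_leN].
have sq_ge0 := sqr_ge0 (2 * M - N).
have MNM_ge0 : 0 <= M * (N - M) by rewrite mulr_ge0 ?subr_ge0.
by rewrite ler_norml; apply/andP; split; nra.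
Qed.

Lemma rho_coefficient_ge0 (N C rho : R) :
  1 < N -> `|C| <= N * (N - 1) -> `|rho| <= 1 -> 0 <= N + rho * C / (N - 1).
Proof.
move=> N_gt1 C_le rho_le1.
have : `|rho * C / (N - 1)| <= N.
  rewrite normf_div normrM (gtr0_norm (_ : 0 < N - 1)) ?subr_gt0 //.
  rewrite ler_pdivrMr ?subr_gt0 //.
  by rewrite -[N * _]mul1r ler_pM.
by rewrite ler_norml => /andP[+ _]; lra.
Qed.

End RhoCoefficient.

Section Monotonicity.
Variables (R : realFieldType) (n n1 : nat).
Hypothesis n_gt1 : (1 < n)%N.

Let slope_denom_gt0 : 0 < n%:R - 1 :> R.
Proof. by rewrite subr_gt0 ltr1n. Qed.

Lemma h_nondecreasing_rho (p r1 r2 : R) : 0 <= p <= 1 ->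
  0 <= centred_excess R n n1 -> r1 <= r2 -> h n n1 p r1 <= h n n1 p r2.
Proof.
move=> p01 C_ge0 r12; rewrite -subr_ge0 h_rho_increment.
rewrite mulr_ge0 ?subr_ge0 // divr_ge0 ?(ltW slope_denom_gt0) //.
by rewrite mulr_ge0 // variance_scale_ge0.
Qed.

Lemma h_nonincreasing_rho (p r1 r2 : R) : 0 <= p <= 1 ->
  centred_excess R n n1 <= 0 -> r1 <= r2 -> h n n1 p r2 <= h n n1 p r1.
Proof.
move=> p01 C_le0 r12; rewrite -subr_le0 h_rho_increment.
rewrite mulr_ge0_le0 ?subr_ge0 //.
rewrite mulr_le0_ge0 ?invr_ge0 ?(ltW slope_denom_gt0) //.
by rewrite mulr_ge0_le0 ?variance_scale_ge0.
Qed.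

Lemma h_nonincreasing_p (rho p1 p2 : R) : (n1 <= n)%N -> `|rho| <= 1 ->
  2^-1 < p1 -> p1 <= p2 -> h n n1 p2 rho <= h n n1 p1 rho.
Proof.
move=> n1_le_n rho_le1 p1_gt_half p12; rewrite !hE.
apply: ler_wpM2r; last exact: variance_scale_nonincreasing.
apply: rho_coefficient_ge0 rho_le1; first by rewrite ltr1n.
by rewrite norm_centred_sq_sub_le ?ler0n ?ler_nat.
Qed.

End Monotonicity.

Theorem theorem4 (R : rcfType) (n n1 : nat) :
  (2 <= n)%N -> (n1 <= n)%N ->
  (* (i) increasing in rho outside the central window *)
  ((n1%:R / n%:R <= 2^-1 - (2 * Num.sqrt (n%:R : R))^-1 \/
    2^-1 + (2 * Num.sqrt (n%:R : R))^-1 <= n1%:R / n%:R) ->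
   forall p : R, 2^-1 < p -> p <= 1 ->
   forall r1 r2 : R, -1 <= r1 -> r1 <= r2 -> r2 <= 1 ->
   h n n1 p r1 <= h n n1 p r2)
  /\
  (* (i) decreasing in rho inside the central window *)
  (2^-1 - (2 * Num.sqrt (n%:R : R))^-1 < n1%:R / n%:R ->
   n1%:R / n%:R < 2^-1 + (2 * Num.sqrt (n%:R : R))^-1 ->
   forall p : R, 2^-1 < p -> p <= 1 ->
   forall r1 r2 : R, -1 <= r1 -> r1 <= r2 -> r2 <= 1 ->
   h n n1 p r2 <= h n n1 p r1)
  /\
  (* (ii) decreasing in p on (1/2, 1] *)
  (forall rho : R, -1 <= rho -> rho <= 1 ->
   forall p1 p2 : R, 2^-1 < p1 -> p1 <= p2 -> p2 <= 1 ->
   h n n1 p2 rho <= h n n1 p1 rho).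
Proof.
move=> n_ge2 n1_le_n.
have n_gt0 : 0 < n%:R :> R by rewrite ltr0n ltnW.
have window := centre_window_iff _ n1%:R n_gt0.
have p_unit (p : R) : 2^-1 < p -> p <= 1 -> 0 <= p <= 1.
  by move=> *; apply/andP; split; lra.
split; [|split].
- move=> outside p p_gt p_le r1 r2 _ r12 _.
  apply: h_nondecreasing_rho r12 => //; first exact: p_unit.
  rewrite /centred_excess subr_ge0 leNgt -window.
  by case: outside => ?; apply/negP => /andP[]; lra.
- move=> lo hi p p_gt p_le r1 r2 _ r12 _.
  apply: h_nonincreasing_rho r12 => //; first exact: p_unit.
  by rewrite /centred_excess subr_le0 ltW // -window lo hi.
- move=> rho rho_ge rho_le p1 p2 p1_gt p12 _.
  by apply: h_nonincreasing_p => //; rewrite ler_norml rho_ge rho_le.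
Qed.
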